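(* Let $f:E\to\mathbb{R}$ be convex (or continuously differentiable and $1$-weakly-quasi-convex) with a minimizer $x_*$, let $\varepsilon>0$ and let $\Theta\ge V(x_*,x^0)$. Then the iterates of Algorithm UAGMsDR with accuracy $\varepsilon$ satisfy, for every $k\ge1$, $$f(x^k)-f(x_* )\le\frac{V(x_*,x^0)}{A_k}+\frac\varepsilon2.$$ Moreover, for every $\nu\in[0,1]$ with $M_\nu<\infty$ and every integer $$N\ge 2^{\frac{2+4\nu}{1+3\nu}}\left[\frac{1-\nu}{1+\nu}\right]^{\frac{1-\nu}{1+3\nu}}\left[\frac{M_\nu}{\varepsilon}\right]^{\frac{2}{1+3\nu}}\Theta^{\frac{1+\nu}{1+3\nu}}$$ (with the factor $\left[\frac{1-\nu}{1+\nu}\right]^{\frac{1-\nu}{1+3\nu}}$ interpreted as $1$ when $\nu=1$), one has $f(x^N)-f(x_* )\le\varepsilon$.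
   Context: $E$ is a finite-dimensional real vector space with a norm $\|\cdot\|$; $E^*$ is its dual, $\langle g,x\rangle$ denotes the value of $g\in E^*$ at $x\in E$, and $\|g\|_*=\max\{\langle g,x\rangle:\|x\|\le 1\}$. For $g\in E^*$, $g^{\#}$ denotes a (fixed) element $s\in E$ with $\|s\|\le 1$ and $\langle g,s\rangle=\|g\|_*$. A prox-function $d:E\to\mathbb{R}$ is continuously differentiable, convex, $1$-strongly convex with respect to $\|\cdot\|$ and satisfies $\min_E d=0$; its Bregman divergence is $V(x,z)=d(x)-d(z)-\langle\nabla d(z),x-z\rangle$. $\nabla f(x)$ denotes the gradient of $f$ if $f$ is differentiable and otherwise a subgradient of the convex function $f$ (as selected by the algorithm). For $\nu\in[0,1]$, $M_\nu\in(0,+\infty]$ denotes the smallest constant such that $\|\nabla f(x)-\nabla f(y)\|_*\le M_\nu\|x-y\|^\nu$ for all $x,y\in E$ ($M_\nu=+\infty$ if no such constant exists). A differentiable $f$ with minimizer $x_*$ is $1$-weakly-quasi-convex if $f(x)-f(x_* )\le\langle\nabla f(x),x-x_*\rangle$ for all $x$. Algorithm UAGMsDR (input $x^0\in E$, accuracy $\varepsilon>0$): set $A_0=0$, $v^0=x^0$, $\psi_0(x)=V(x,x^0)$. For $k=0,1,2,\dots$: 1. Choose $\beta_k\in\arg\min_{\beta\in[0,1]}f(v^k+\beta(x^k-v^k))$, set $y^k=v^k+\beta_k(x^k-v^k)$, and choose $\nabla f(y^k)$ (the gradient, or a subgradient in the convex nonsmooth case) such that $\langle\nabla f(y^k),v^k-y^k\rangle\ge0$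 (such a choice exists by optimality of $\beta_k$). 2. $h_{k+1}\in\arg\min_{h\ge0}f(y^k-h(\nabla f(y^k))^{\#})$, $x^{k+1}=y^k-h_{k+1}(\nabla f(y^k))^{\#}$; $a_{k+1}$ is the largest solution of $f(y^k)-\frac{a_{k+1}^2}{2(A_k+a_{k+1})}\|\nabla f(y^k)\|_*^2+\frac{\varepsilon a_{k+1}}{2(A_k+a_{k+1})}=f(x^{k+1})$. 3. $A_{k+1}=A_k+a_{k+1}$; $\psi_{k+1}(x)=\psi_k(x)+a_{k+1}\{f(y^k)+\langle\nabla f(y^k),x-y^k\rangle\}$; $v^{k+1}=\arg\min_{x\in E}\psi_{k+1}(x)$. All minima are assumed attained, and $\nabla f(y^k)\ne0$ for all iterations considered. *)

From Stdlib Require Import Reals Lra.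
From Stdlib Require Fin.
Open Scope R_scope.

(* E = R^n, represented as functions on Fin.t n; E^* is identified with R^n
   through the canonical pairing <g,x> = sum_i g_i x_i. *)
Definition E (n : nat) := Fin.t n -> R.

Fixpoint fsum (n : nat) : (Fin.t n -> R) -> R :=
  match n return (Fin.t n -> R) -> R with
  | O => fun _ => 0
  | S m => fun u => u (@Fin.F1 m) + fsum m (fun i => u (Fin.FS i))
  end.

Definition pair {n} (g x : E n) : R := fsum n (fun i => g i * x i).
Definition vadd {n} (x y : E n) : E n := fun i => x i + y i.
Definition vsub {n} (x y : E n) : E n := fun i => x i - y i.
Definition vscal {n} (c : R) (x : E n) : E n := fun i => c * x i.
Definition vzero {n} : E n := fun _ => 0.

Definition is_norm {n} (nrm : E n -> R) : Prop :=
  (forall x, 0 <= nrm x) /\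
  (forall x, nrm x = 0 -> x = vzero) /\
  (forall c x, nrm (vscal c x) = Rabs c * nrm x) /\
  (forall x y, nrm (vadd x y) <= nrm x + nrm y).

Definition is_sharp_map {n} (nrm : E n -> R) (sh : E n -> E n) : Prop :=
  forall g, nrm (sh g) <= 1 /\ (forall z, nrm z <= 1 -> pair g z <= pair g (sh g)).

Definition dnorm {n} (sh : E n -> E n) (g : E n) : R := pair g (sh g).

(* real power with the conventions 0^0 = 1 and 0^a = 0 for a > 0 *)
Definition rpow (x a : R) : R :=
  if Req_EM_T x 0 then (if Req_EM_T a 0 then 1 else 0) else Rpower x a.

Definition frechet {n} (nrm : E n -> R) (F : E n -> R) (x G : E n) : Prop :=
  forall eps, 0 < eps -> exists delta, 0 < delta /\
    forall hh, nrm hh < delta ->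
      Rabs (F (vadd x hh) - F x - pair G hh) <= eps * nrm hh.

Definition cont_diff {n} (nrm : E n -> R) (sh : E n -> E n) (F : E n -> R) (G : E n -> E n) : Prop :=
  (forall x, frechet nrm F x (G x)) /\
  (forall x eps, 0 < eps -> exists delta, 0 < delta /\
     forall z, nrm (vsub z x) < delta -> dnorm sh (vsub (G z) (G x)) < eps).

Definition convex {n} (F : E n -> R) : Prop :=
  forall x z t, 0 <= t <= 1 ->
    F (vadd (vscal t x) (vscal (1 - t) z)) <= t * F x + (1 - t) * F z.

Definition is_subgrad {n} (F : E n -> R) (x g : E n) : Prop :=
  forall z, F x + pair g (vsub z x) <= F z.

Definition is_minimizer {n} (F : E n -> R) (xs : E n) : Prop :=
  forall z, F xs <= F z.

Definition weakly_quasi_convex1 {n} (F : E n -> R) (G : E n -> E n) (xs : E n) : Prop :=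
  forall x, F x - F xs <= pair (G x) (vsub x xs).

Definition is_prox {n} (nrm : E n -> R) (sh : E n -> E n) (d : E n -> R) (gd : E n -> E n) : Prop :=
  cont_diff nrm sh d gd /\ convex d /\
  (forall x z, d x + pair (gd x) (vsub z x) + / 2 * (nrm (vsub z x))^2 <= d z) /\
  (exists x, d x = 0) /\ (forall x, 0 <= d x).

Definition Breg {n} (d : E n -> R) (gd : E n -> E n) (x z : E n) : R :=
  d x - d z - pair (gd z) (vsub x z).

(* Holder condition for the (sub)gradient relation D (D x g : g is nabla f(x)) *)
Definition holder {n} (nrm : E n -> R) (sh : E n -> E n) (D : E n -> E n -> Prop)
  (nu M : R) : Prop :=
  forall x z gx gz, D x gx -> D z gz ->
    dnorm sh (vsub gx gz) <= M * rpow (nrm (vsub x z)) nu.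

Definition is_M_nu {n} (nrm : E n -> R) (sh : E n -> E n) (D : E n -> E n -> Prop)
  (nu M : R) : Prop :=
  holder nrm sh D nu M /\ (forall M', holder nrm sh D nu M' -> M <= M').

Fixpoint psi {n} (d : E n -> R) (gd : E n -> E n) (f : E n -> R) (x0 : E n)
  (y g : nat -> E n) (a : nat -> R) (k : nat) (z : E n) : R :=
  match k with
  | O => Breg d gd z x0
  | S k' => psi d gd f x0 y g a k' z + a (S k') * (f (y k') + pair (g k') (vsub z (y k')))
  end.

Definition a_equation {n} (sh : E n -> E n) (f : E n -> R) (eps Ak : R)
  (yk gk xk1 : E n) (t : R) : Prop :=
  Ak + t <> 0 /\
  f yk - t ^ 2 / (2 * (Ak + t)) * (dnorm sh gk) ^ 2 + eps * t / (2 * (Ak + t)) = f xk1.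

(* the iterates of Algorithm UAGMsDR; g k is the chosen nabla f(y^k) *)
Definition UAGMsDR {n} (sh : E n -> E n) (f : E n -> R) (D : E n -> E n -> Prop)
  (d : E n -> R) (gd : E n -> E n) (eps : R) (x0 : E n)
  (x v y g : nat -> E n) (beta h a A : nat -> R) : Prop :=
  x O = x0 /\ v O = x0 /\ A O = 0 /\
  forall k,
    (0 <= beta k <= 1 /\
     (forall b, 0 <= b <= 1 ->
        f (vadd (v k) (vscal (beta k) (vsub (x k) (v k)))) <=
        f (vadd (v k) (vscal b (vsub (x k) (v k))))) /\
     y k = vadd (v k) (vscal (beta k) (vsub (x k) (v k))) /\
     D (y k) (g k) /\ 0 <= pair (g k) (vsub (v k) (y k))) /\
    (0 <= h (S k) /\
     (forall t, 0 <= t ->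
        f (vsub (y k) (vscal (h (S k)) (sh (g k)))) <= f (vsub (y k) (vscal t (sh (g k))))) /\
     x (S k) = vsub (y k) (vscal (h (S k)) (sh (g k))) /\
     a_equation sh f eps (A k) (y k) (g k) (x (S k)) (a (S k)) /\
     (forall t, a_equation sh f eps (A k) (y k) (g k) (x (S k)) t -> t <= a (S k))) /\
    (A (S k) = A k + a (S k) /\
     forall z, psi d gd f x0 y g a (S k) (v (S k)) <= psi d gd f x0 y g a (S k) z).

Definition N_bound (nu M eps Theta : R) : R :=
  Rpower 2 ((2 + 4 * nu) / (1 + 3 * nu)) *
  rpow ((1 - nu) / (1 + nu)) ((1 - nu) / (1 + 3 * nu)) *
  rpow (M / eps) (2 / (1 + 3 * nu)) *
  rpow Theta ((1 + nu) / (1 + 3 * nu)).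

(* The estimate sequence [psi_k = V(., x0) + sum_i a_i (f (y_i) + <g_i, . - y_i>)] is 1-strongly
   convex, so its minimum, attained at [v_k], stays above [A_k f (x_k) - A_k eps / 2]: the line search
   defining [y_k] and [<g_k, v_k - y_k> >= 0] make the new linear term harmless, and the equation
   defining [a_(k+1)] pays exactly for the quadratic one.  Since [psi_k xs <= V(xs, x0) + A_k f xs],
   this is the first bound.  For the rate, the Holder condition makes [f] decrease along the ray
   [y_k - t g_k^#] by at least [t ||g_k||_* - M t^(1+nu) / (1+nu)] (in the convex case through
   subgradients, which exist in finite dimension by Hahn-Banach).  Young's inequality turns this into
   [a_(k+1) >= c A_(k+1)^(1-q)] with [q = (1+nu)/(1+3nu)], and by concavity of [s |-> s^q] the
   quantity [A_k^q] grows at least linearly, so [A_N >= 2 Theta / eps] as soon as [N >= N_bound]. *)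

From Stdlib Require Import Reals Lra Lia Psatz FunctionalExtensionality Classical.
Open Scope R_scope.

Lemma vext {n} (x y : E n) : (forall i, x i = y i) -> x = y.
Proof. intro H; now apply functional_extensionality. Qed.

Ltac vec_eq := apply vext; intro; unfold vadd, vsub, vscal, vzero.

Lemma fsum_ext n (u w : Fin.t n -> R) : (forall i, u i = w i) -> fsum n u = fsum n w.
Proof.
  induction n as [|n IH]; intros H; simpl; [reflexivity|].
  now rewrite H, (IH _ (fun i => w (Fin.FS i))).
Qed.

Lemma fsum_add n (u w : Fin.t n -> R) : fsum n (fun i => u i + w i) = fsum n u + fsum n w.
Proof. induction n as [|n IH]; simpl; [ring|]. rewrite IH; ring. Qed.

Lemma fsum_scal n c (u : Fin.t n -> R) : fsum n (fun i => c * u i) = c * fsum n u.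
Proof. induction n as [|n IH]; simpl; [ring|]. rewrite IH; ring. Qed.

Lemma fsum_nonneg n (u : Fin.t n -> R) : (forall i, 0 <= u i) -> 0 <= fsum n u.
Proof.
  induction n as [|n IH]; intros H; simpl; [lra|].
  specialize (IH (fun i => u (Fin.FS i)) (fun i => H (Fin.FS i))). specialize (H Fin.F1). lra.
Qed.

Lemma fsum_pos n (u : Fin.t n -> R) i : (forall j, 0 <= u j) -> 0 < u i -> 0 < fsum n u.
Proof.
  induction n as [|n IH]; [inversion i|]. intros H. simpl.
  pose proof (fsum_nonneg n (fun j => u (Fin.FS j)) (fun j => H (Fin.FS j))).
  pose proof (H Fin.F1).
  apply (Fin.caseS' i (fun i => 0 < u i -> _)); [lra|].
  intros j Hj. specialize (IH (fun j => u (Fin.FS j)) j (fun j => H (Fin.FS j)) Hj). lra.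
Qed.

Section Pairing.
Context {n : nat}.
Implicit Types g h x y z : E n.

Lemma pair_add_r g x y : pair g (vadd x y) = pair g x + pair g y.
Proof. unfold pair, vadd; rewrite <- fsum_add; apply fsum_ext; intro; ring. Qed.

Lemma pair_scal_r g c x : pair g (vscal c x) = c * pair g x.
Proof. unfold pair, vscal; rewrite <- fsum_scal; apply fsum_ext; intro; ring. Qed.

Lemma pair_add_l g h x : pair (vadd g h) x = pair g x + pair h x.
Proof. unfold pair, vadd; rewrite <- fsum_add; apply fsum_ext; intro; ring. Qed.

Lemma pair_scal_l c g x : pair (vscal c g) x = c * pair g x.
Proof. unfold pair, vscal; rewrite <- fsum_scal; apply fsum_ext; intro; ring. Qed.

Lemma pair_sub_r g x y : pair g (vsub x y) = pair g x - pair g y.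
Proof.
  replace (vsub x y) with (vadd x (vscal (-1) y)) by (vec_eq; ring).
  rewrite pair_add_r, pair_scal_r; ring.
Qed.

Lemma pair_sub_l g h x : pair (vsub g h) x = pair g x - pair h x.
Proof.
  replace (vsub g h) with (vadd g (vscal (-1) h)) by (vec_eq; ring).
  rewrite pair_add_l, pair_scal_l; ring.
Qed.

Lemma pair_zero_r g : pair g vzero = 0.
Proof. replace vzero with (vscal 0 g) by (vec_eq; ring). rewrite pair_scal_r; ring. Qed.

Lemma pair_self_pos g : g <> vzero -> 0 < pair g g.
Proof.
  intros Hg.
  assert (Hi : exists i, g i <> 0).
  { apply not_all_ex_not. intro H0. apply Hg. vec_eq. apply H0. }
  destruct Hi as [i Hi]. apply (fsum_pos n _ i); intros; [apply Rle_0_sqr|].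
  apply Rlt_0_sqr, Hi.
Qed.
End Pairing.

Section Norm.
Context {n : nat} (nrm : E n -> R) (sh : E n -> E n).
Hypothesis Hn : is_norm nrm.
Hypothesis Hs : is_sharp_map nrm sh.
Implicit Types g h x y z w : E n.

Lemma nrm_nonneg x : 0 <= nrm x. Proof. apply Hn. Qed.
Lemma nrm_scal c x : nrm (vscal c x) = Rabs c * nrm x. Proof. apply Hn. Qed.
Lemma nrm_eq0 x : nrm x = 0 -> x = vzero. Proof. apply Hn. Qed.

Lemma nrm_zero : nrm vzero = 0.
Proof.
  replace (@vzero n) with (vscal 0 (@vzero n)) by (vec_eq; ring). rewrite nrm_scal, Rabs_R0; ring.
Qed.

Lemma nrm_sub_eq0 x y : nrm (vsub x y) = 0 -> x = y.
Proof.
  intros H. apply nrm_eq0 in H. apply vext; intro i.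
  pose proof (f_equal (fun u => u i) H) as Hi. unfold vsub, vzero in Hi. simpl in Hi. lra.
Qed.

Lemma nrm_sharp g : nrm (sh g) <= 1. Proof. apply Hs. Qed.

Lemma pair_le_dnorm_unit h z : nrm z <= 1 -> pair h z <= dnorm sh h.
Proof. intros. now apply (proj2 (Hs h)). Qed.

Lemma dnorm_nonneg h : 0 <= dnorm sh h.
Proof. rewrite <- (pair_zero_r h). apply pair_le_dnorm_unit. rewrite nrm_zero; lra. Qed.

Lemma pair_le_dnorm h w : pair h w <= dnorm sh h * nrm w.
Proof.
  destruct (Req_dec (nrm w) 0) as [H0|H0].
  - apply nrm_eq0 in H0; subst. rewrite pair_zero_r, nrm_zero; lra.
  - assert (Hw : 0 < nrm w) by (pose proof (nrm_nonneg w); lra).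
    replace w with (vscal (nrm w) (vscal (/ nrm w) w)) at 1 by (vec_eq; field; lra).
    rewrite pair_scal_r, (Rmult_comm (dnorm sh h)). apply Rmult_le_compat_l; [lra|].
    apply pair_le_dnorm_unit.
    rewrite nrm_scal, Rabs_right by (apply Rle_ge; left; now apply Rinv_0_lt_compat).
    rewrite Rinv_l; lra.
Qed.

Lemma dnorm_pos g : g <> vzero -> 0 < dnorm sh g.
Proof.
  intros Hg. pose proof (pair_self_pos g Hg). pose proof (pair_le_dnorm g g).
  pose proof (dnorm_nonneg g). pose proof (nrm_nonneg g). nra.
Qed.
End Norm.

(** * Strong convexity of the estimate sequence *)

Definition strongly_convex1 {n} (nrm : E n -> R) (F : E n -> R) : Prop :=
  forall t z v, 0 <= t <= 1 ->
    F (vadd (vscal t z) (vscal (1 - t) v)) <=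
    t * F z + (1 - t) * F v - t * (1 - t) / 2 * nrm (vsub z v) ^ 2.

Section StrongConvexity.
Context {n : nat} (nrm : E n -> R).
Implicit Types z v : E n.

Lemma strongly_convex1_affine (F G : E n -> R) c e :
  (forall z, G z = F z + pair c z + e) -> strongly_convex1 nrm F -> strongly_convex1 nrm G.
Proof.
  intros HG HF t z v Ht. rewrite !HG, pair_add_r, !pair_scal_r.
  specialize (HF t z v Ht). lra.
Qed.

Lemma strongly_convex1_min_growth (F : E n -> R) v :
  strongly_convex1 nrm F -> (forall z, F v <= F z) ->
  forall z, F v + / 2 * nrm (vsub z v) ^ 2 <= F z.
Proof.
  intros HF Hmin z. set (C := / 2 * nrm (vsub z v) ^ 2).
  assert (HC : 0 <= C) by (unfold C; pose proof (pow2_ge_0 (nrm (vsub z v))); lra).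
  cut (F v <= F z - C); [lra|].
  apply Rle_plus_epsilon; intros e He.
  set (t := e / (e + C)).
  assert (Ht : 0 < t <= 1).
  { unfold t; split; [apply Rdiv_lt_0_compat; lra|].
    apply Rmult_le_reg_r with (e + C); [lra|]. field_simplify; lra. }
  assert (HtC : t * C <= e).
  { unfold t. apply Rmult_le_reg_r with (e + C); [lra|]. field_simplify; nra. }
  (* compare with the segment point of parameter [t], divide by [t] and let [t -> 0] *)
  pose proof (HF t z v ltac:(lra)) as Hseg. pose proof (Hmin (vadd (vscal t z) (vscal (1 - t) v))).
  assert (t * F v <= t * (F z - C + t * C)) by (unfold C in *; nra).
  assert (F v <= F z - C + t * C) by (apply Rmult_le_reg_l with t; lra).
  lra.
Qed.
End StrongConvexity.

Section Prox.
Context {n : nat} (nrm : E n -> R) (sh : E n -> E n) (d : E n -> R) (gd : E n -> E n).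
Hypothesis Hn : is_norm nrm.
Hypothesis Hp : is_prox nrm sh d gd.
Implicit Types x z v : E n.

Lemma Breg_self x : Breg d gd x x = 0.
Proof. unfold Breg. replace (vsub x x) with (@vzero n) by (vec_eq; ring). rewrite pair_zero_r; ring. Qed.

Lemma Breg_ge x z : / 2 * nrm (vsub x z) ^ 2 <= Breg d gd x z.
Proof. unfold Breg. pose proof (proj1 (proj2 (proj2 Hp)) z x). lra. Qed.

Lemma prox_strongly_convex1 : strongly_convex1 nrm d.
Proof.
  intros t z v Ht. set (m := vadd (vscal t z) (vscal (1 - t) v)).
  destruct Hp as (_ & _ & Hstr & _).
  pose proof (Hstr m z) as Hz. pose proof (Hstr m v) as Hv.
  replace (vsub z m) with (vscal (1 - t) (vsub z v)) in Hz by (unfold m; vec_eq; ring).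
  replace (vsub v m) with (vscal (- t) (vsub z v)) in Hv by (unfold m; vec_eq; ring).
  rewrite pair_scal_r, (nrm_scal nrm Hn) in Hz, Hv.
  rewrite Rabs_right in Hz by lra. rewrite Rabs_Ropp, Rabs_right in Hv by lra.
  pose proof (Rmult_le_compat_l t _ _ (proj1 Ht) Hz).
  pose proof (Rmult_le_compat_l (1 - t) _ _ ltac:(lra) Hv).
  nra.
Qed.

Lemma psi_strongly_convex1 f x0 (y g : nat -> E n) (a : nat -> R) k :
  strongly_convex1 nrm (psi d gd f x0 y g a k).
Proof.
  induction k as [|k IH]; simpl.
  - apply (strongly_convex1_affine nrm d _ (vscal (-1) (gd x0)) (pair (gd x0) x0 - d x0));
      [|apply prox_strongly_convex1].
    intro z. unfold Breg. rewrite pair_sub_r, pair_scal_l. ring.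
  - apply (strongly_convex1_affine nrm (psi d gd f x0 y g a k) _ (vscal (a (S k)) (g k))
      (a (S k) * (f (y k) - pair (g k) (y k)))); [|exact IH].
    intro z. rewrite pair_sub_r, pair_scal_l. ring.
Qed.
End Prox.

(** * Real-variable inequalities *)

Lemma ln_le x y : 0 < x -> x <= y -> ln x <= ln y.
Proof. intros Hx [H|H]; [left; now apply ln_increasing|subst; lra]. Qed.

Lemma ln_le_inv x y : 0 < x -> 0 < y -> ln x <= ln y -> x <= y.
Proof. intros Hx Hy [H|H]; [left; now apply ln_lt_inv|right; now apply ln_inv]. Qed.

Lemma exp_convex u w al : 0 <= al <= 1 ->
  exp (al * u + (1 - al) * w) <= al * exp u + (1 - al) * exp w.
Proof.
  intros Hal. set (m := al * u + (1 - al) * w).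
  assert (Htangent : forall z, exp m * (1 + (z - m)) <= exp z).
  { intro z. replace z with (m + (z - m)) at 2 by ring. rewrite exp_plus.
    pose proof (exp_ineq1_le (z - m)). pose proof (exp_pos m). nra. }
  pose proof (Htangent u). pose proof (Htangent w).
  assert (al * (exp m * (1 + (u - m))) + (1 - al) * (exp m * (1 + (w - m))) = exp m) by (unfold m; ring).
  nra.
Qed.

Lemma Rpower_concave x y q : 0 < x -> 0 < y -> 0 <= q <= 1 ->
  Rpower x q <= Rpower y q + q * Rpower y (q - 1) * (x - y).
Proof.
  intros Hx Hy Hq. unfold Rpower.
  pose proof (exp_convex (ln x - ln y) 0 q Hq) as H. rewrite exp_0 in H.
  pose proof (Rmult_le_compat_l _ _ _ (Rlt_le _ _ (exp_pos (q * ln y))) H) as H'.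
  rewrite <- exp_plus in H'.
  replace (q * ln y + (q * (ln x - ln y) + (1 - q) * 0)) with (q * ln x) in H' by ring.
  replace (exp (q * ln y)) with (exp ((q - 1) * ln y) * y) in *
    by (rewrite <- (exp_ln y) at 2 by lra; rewrite <- exp_plus; f_equal; ring).
  replace (exp (ln x - ln y)) with (x / y) in H'
    by (unfold Rminus; rewrite exp_plus, exp_Ropp, !exp_ln by lra; reflexivity).
  replace (exp ((q - 1) * ln y) * y * (q * (x / y) + (1 - q) * 1))
    with (exp ((q - 1) * ln y) * y + q * exp ((q - 1) * ln y) * (x - y)) in H' by (field; lra).
  exact H'.
Qed.

Lemma rpow_Rpower x c : 0 < x -> rpow x c = Rpower x c.
Proof. intros. unfold rpow. destruct (Req_EM_T x 0); [lra|reflexivity]. Qed.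

Lemma rpow_pos x c : 0 < x -> 0 < rpow x c.
Proof. intros. rewrite rpow_Rpower by lra. apply exp_pos. Qed.

Lemma rpow_nonneg x c : 0 <= rpow x c.
Proof.
  unfold rpow. destruct (Req_EM_T x 0); [destruct (Req_EM_T c 0); lra|].
  left; apply exp_pos.
Qed.

Lemma rpow_0_r x : rpow x 0 = 1.
Proof.
  unfold rpow, Rpower. destruct (Req_EM_T x 0); [destruct (Req_EM_T 0 0); lra|].
  now rewrite Rmult_0_l, exp_0.
Qed.

Lemma rpow_0_l c : c <> 0 -> rpow 0 c = 0.
Proof. intros. unfold rpow. destruct (Req_EM_T 0 0); [destruct (Req_EM_T c 0); lra|lra]. Qed.

Lemma rpow_le_compat x y c : 0 <= c -> 0 <= x <= y -> rpow x c <= rpow y c.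
Proof.
  intros Hc Hxy. destruct (Req_dec c 0) as [->|Hc0]; [rewrite !rpow_0_r; lra|].
  destruct (Req_dec x 0) as [->|Hx0]; [rewrite rpow_0_l by lra; apply rpow_nonneg|].
  rewrite !rpow_Rpower by lra. apply Rle_Rpower_l; lra.
Qed.

Lemma rpow_tangent nu al be : 0 <= nu <= 1 -> 0 <= al < be ->
  (1 + nu) * (be - al) * rpow al nu <= be * rpow be nu - al * rpow al nu.
Proof.
  intros Hnu Hab. destruct (Req_dec al 0) as [->|Ha0].
  - destruct (Req_dec nu 0) as [->|Hn0]; [rewrite !rpow_0_r; lra|].
    rewrite rpow_0_l by lra. pose proof (rpow_nonneg be nu). nra.
  - rewrite !rpow_Rpower by lra. unfold Rpower.
    assert (Hln : 1 - al / be <= ln be - ln al).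
    { pose proof (exp_ineq1_le (ln al - ln be)).
      unfold Rminus at 2 in H. rewrite exp_plus, exp_Ropp, !exp_ln in H by lra.
      unfold Rdiv. lra. }
    replace (nu * ln be) with (nu * ln al + nu * (ln be - ln al)) by ring.
    rewrite exp_plus. pose proof (exp_ineq1_le (nu * (ln be - ln al))).
    pose proof (exp_pos (nu * ln al)).
    assert (nu * (1 - al / be) <= nu * (ln be - ln al)) by (apply Rmult_le_compat_l; lra).
    assert (be * (1 + nu * (1 - al / be)) = be + nu * (be - al)) by (field; lra).
    assert (be * (1 + nu * (1 - al / be)) <= be * exp (nu * (ln be - ln al)))
      by (apply Rmult_le_compat_l; lra).
    nra.
Qed.

Definition young_exp (nu : R) := (1 - nu) / (1 + nu).

(* [(p / dl) ^ p * M ^ (2 / (1 + nu))] with [p = young_exp nu], written with [exp] and [ln]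
   so that [p = 0] (i.e. [nu = 1], where [ln 0] is a junk value) needs no case split. *)
Definition young_const (nu M dl : R) :=
  exp (young_exp nu * ln (young_exp nu / dl) + 2 / (1 + nu) * ln M).

Lemma young_holder nu M dl t : 0 <= nu <= 1 -> 0 < M -> 0 < dl -> 0 <= t ->
  M * (t * rpow t nu) / (1 + nu) <= young_const nu M dl * t ^ 2 / 2 + dl / 2.
Proof.
  intros Hnu HM Hdl Ht. pose proof (exp_pos (young_exp nu * ln (young_exp nu / dl) + 2 / (1 + nu) * ln M)).
  unfold young_const. destruct (Req_dec t 0) as [->|Ht0]; [unfold Rdiv; nra|].
  destruct (Req_dec nu 1) as [->|Hn1].
  - unfold young_exp. replace ((1 - 1) / (1 + 1)) with 0 by field.
    replace (2 / (1 + 1)) with 1 by field. rewrite Rmult_0_l, Rmult_1_l, Rplus_0_l, exp_ln by lra.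
    rewrite rpow_Rpower, Rpower_1 by lra. nra.
  - set (L := young_exp nu * ln (young_exp nu / dl) + 2 / (1 + nu) * ln M).
    pose proof (exp_convex (L + 2 * ln t - ln (1 + nu)) (ln dl - ln (1 - nu)) ((1 + nu) / 2)
      ltac:(split; lra)) as H'.
    assert (Hln : ln (young_exp nu / dl) = ln (1 - nu) - ln (1 + nu) - ln dl).
    { unfold young_exp, Rdiv. rewrite !ln_mult, !ln_Rinv; try lra;
        repeat apply Rmult_lt_0_compat; try apply Rinv_0_lt_compat; lra. }
    replace ((1 + nu) / 2 * (L + 2 * ln t - ln (1 + nu)) + (1 - (1 + nu) / 2) * (ln dl - ln (1 - nu)))
      with (ln M + (ln t + nu * ln t) - ln (1 + nu)) in H'
      by (unfold L; rewrite Hln; unfold young_exp; field; lra).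
    unfold Rminus in H'. rewrite !exp_plus, !exp_Ropp, !exp_ln in H' by lra.
    replace (2 * ln t) with (ln t + ln t) in H' by ring.
    rewrite exp_plus, exp_ln in H' by lra.
    rewrite rpow_Rpower by lra. unfold Rpower.
    apply (Rle_trans _ _ _ H'). right. field. lra.
Qed.

Lemma le_0_of_le_div_INR X C : (forall m, (1 <= m)%nat -> X <= C / INR m) -> X <= 0.
Proof.
  intros H. apply Rnot_lt_le; intro HX.
  assert (HC : 0 < Rabs C + 1) by (pose proof (Rabs_pos C); lra).
  destruct (archimed_cor1 (X / (Rabs C + 1))) as [m [Hm Hm0]]; [apply Rdiv_lt_0_compat; lra|].
  assert (HmR : 0 < INR m) by (apply lt_0_INR; lia).
  specialize (H m ltac:(lia)).
  assert (C / INR m <= (Rabs C + 1) * / INR m)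
    by (apply Rmult_le_compat_r; [left; now apply Rinv_0_lt_compat|pose proof (Rle_abs C); lra]).
  assert ((Rabs C + 1) * / INR m < (Rabs C + 1) * (X / (Rabs C + 1)))
    by (apply Rmult_lt_compat_l; lra).
  replace ((Rabs C + 1) * (X / (Rabs C + 1))) with X in * by (field; lra).
  lra.
Qed.

(* Telescoping over the grid [t j / m] bounds [phi t - phi 0] by [K (w t - w 0) t / m] for every [m]. *)
Lemma nonincreasing_of_second_order_increments (phi w : R -> R) K t : 0 <= t ->
  (forall al be, 0 <= al < be -> phi be - phi al <= K * (be - al) * (w be - w al)) ->
  phi t <= phi 0.
Proof.
  intros Ht Hinc. destruct (Req_dec t 0) as [->|Ht0]; [lra|].
  cut (phi t - phi 0 <= 0); [lra|].
  apply (le_0_of_le_div_INR _ (K * t * (w t - w 0))). intros m Hm.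
  assert (HmR : 0 < INR m) by (apply lt_0_INR; lia).
  set (s := t / INR m). assert (Hs : 0 < s) by (unfold s; apply Rdiv_lt_0_compat; lra).
  assert (Hgrid : forall j, phi (INR j * s) - phi 0 <= K * s * (w (INR j * s) - w 0)).
  { induction j as [|j IH]; [simpl; rewrite Rmult_0_l; lra|].
    rewrite S_INR. pose proof (pos_INR j).
    pose proof (Hinc (INR j * s) ((INR j + 1) * s) ltac:(split; nra)) as Hj.
    replace ((INR j + 1) * s - INR j * s) with s in Hj by ring. lra. }
  specialize (Hgrid m). replace (INR m * s) with t in Hgrid by (unfold s; field; lra).
  replace (K * t * (w t - w 0) / INR m) with (K * s * (w t - w 0)) by (unfold s; field; lra).
  exact Hgrid.
Qed.

Lemma holder_descent_real (phi : R -> R) G M nu t : 0 <= M -> 0 <= nu <= 1 -> 0 <= t ->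
  (forall al be, 0 <= al < be -> phi be - phi al <= (be - al) * (- G + M * rpow be nu)) ->
  phi t <= phi 0 - t * G + M * (t * rpow t nu) / (1 + nu).
Proof.
  intros HM Hnu Ht Hinc.
  set (chi := fun tau => phi tau + tau * G - M * (tau * rpow tau nu) / (1 + nu)).
  enough (chi t <= chi 0) by (unfold chi in *; rewrite !Rmult_0_l in *; unfold Rdiv in *; lra).
  apply (nonincreasing_of_second_order_increments chi (fun tau => rpow tau nu) M t Ht).
  intros al be Hab. unfold chi.
  pose proof (Hinc al be Hab). pose proof (rpow_tangent nu al be Hnu Hab).
  assert (M * ((1 + nu) * (be - al) * rpow al nu) <= M * (be * rpow be nu - al * rpow al nu))
    by (apply Rmult_le_compat_l; lra).
  assert (M * (be - al) * rpow al nu <= M * (be * rpow be nu - al * rpow al nu) / (1 + nu)).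
  { apply Rmult_le_reg_r with (1 + nu); [lra|].
    replace (M * (be * rpow be nu - al * rpow al nu) / (1 + nu) * (1 + nu))
      with (M * (be * rpow be nu - al * rpow al nu)) by (field; lra). nra. }
  nra.
Qed.

(** * Subgradients of convex functions in finite dimension *)

Definition is_infimum {T} (P : T -> Prop) (F : T -> R) (r : R) : Prop :=
  (forall t, P t -> r <= F t) /\ (forall r', (forall t, P t -> r' <= F t) -> r' <= r).

Lemma infimum_exists {T} (P : T -> Prop) (F : T -> R) B :
  (exists t, P t) -> (forall t, P t -> B <= F t) -> {r | is_infimum P F r}.
Proof.
  intros Hne HB. set (S := fun z => exists t, P t /\ z = - F t).
  assert (Hbound : bound S) by (exists (- B); intros z [t [Pt ->]]; specialize (HB t Pt); lra).
  assert (Hex : exists z, S z) by (destruct Hne as [t0 Ht0]; exists (- F t0), t0; auto).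
  destruct (completeness S Hbound Hex) as [l [Hub Hl]].
  exists (- l). split.
  - intros t Pt. specialize (Hub (- F t) (ex_intro _ t (conj Pt eq_refl))). lra.
  - intros r' Hr'. enough (l <= - r') by lra.
    apply Hl. intros z [t [Pt ->]]. specialize (Hr' t Pt). lra.
Qed.

Lemma infimum_le_add {T1 T2 T} (P1 : T1 -> Prop) F1 r1 (P2 : T2 -> Prop) F2 r2
  (P : T -> Prop) F r :
  is_infimum P1 F1 r1 -> is_infimum P2 F2 r2 -> is_infimum P F r ->
  (forall t1 t2, P1 t1 -> P2 t2 -> exists t, P t /\ F t <= F1 t1 + F2 t2) -> r <= r1 + r2.
Proof.
  intros [_ H1] [_ H2] [Hr _] Hsum.
  cut (r - r2 <= r1); [lra|]. apply H1. intros t1 Pt1.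
  cut (r - F1 t1 <= r2); [lra|]. apply H2. intros t2 Pt2.
  destruct (Hsum t1 t2 Pt1 Pt2) as [t [Pt Ht]]. specialize (Hr t Pt). lra.
Qed.

Lemma infimum_le_scal {T1 T} (P1 : T1 -> Prop) F1 r1 (P : T -> Prop) F r l : 0 < l ->
  is_infimum P1 F1 r1 -> is_infimum P F r ->
  (forall t1, P1 t1 -> exists t, P t /\ F t <= l * F1 t1) -> r <= l * r1.
Proof.
  intros Hl [_ H1] [Hr _] Hscal.
  replace r with (l * (r / l)) by (field; lra). apply Rmult_le_compat_l; [lra|].
  apply H1. intros t1 Pt1. destruct (Hscal t1 Pt1) as [t [Pt Ht]]. specialize (Hr t Pt).
  apply Rmult_le_reg_l with l; [lra|]. replace (l * (r / l)) with r by (field; lra). lra.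
Qed.

Definition vcons {m} (c0 : R) (c : E m) : E (S m) := fun i => Fin.caseS' i (fun _ => R) c0 c.
Definition vtail {m} (w : E (S m)) : E m := fun i => w (Fin.FS i).

Lemma vcons_eta {m} (w : E (S m)) : w = vcons (w Fin.F1) (vtail w).
Proof. apply vext; intro i; now apply (Fin.caseS' i). Qed.

Lemma pair_vcons {m} c0 (c : E m) t u : pair (vcons c0 c) (vcons t u) = c0 * t + pair c u.
Proof. reflexivity. Qed.

Lemma vadd_vcons {m} t1 (u1 : E m) t2 u2 :
  vadd (vcons t1 u1) (vcons t2 u2) = vcons (t1 + t2) (vadd u1 u2).
Proof. apply vext; intro i; now apply (Fin.caseS' i). Qed.

Lemma vscal_vcons {m} l t (u : E m) : vscal l (vcons t u) = vcons (l * t) (vscal l u).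
Proof. apply vext; intro i; now apply (Fin.caseS' i). Qed.

Lemma vzero_vcons {m} : (@vzero (S m)) = vcons 0 vzero.
Proof. apply vext; intro i; now apply (Fin.caseS' i). Qed.

Definition sublinear {m} (q : E m -> R) : Prop :=
  (forall w1 w2, q (vadd w1 w2) <= q w1 + q w2) /\
  (forall l w, 0 < l -> q (vscal l w) <= l * q w).

Section Sublinear.
Context {m : nat} (q : E m -> R).
Hypothesis Hq : sublinear q.

Lemma sublinear_zero : 0 <= q vzero.
Proof.
  pose proof (proj2 Hq 2 vzero ltac:(lra)) as H.
  replace (vscal 2 (@vzero m)) with (@vzero m) in H by (vec_eq; ring). lra.
Qed.

Lemma sublinear_scal l w : 0 < l -> q (vscal l w) = l * q w.
Proof.
  intros Hl. apply Rle_antisym; [now apply Hq|].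
  pose proof (proj2 Hq (/ l) (vscal l w) ltac:(now apply Rinv_0_lt_compat)) as H.
  replace (vscal (/ l) (vscal l w)) with w in H by (vec_eq; field; lra).
  apply Rmult_le_reg_l with (/ l); [now apply Rinv_0_lt_compat|].
  rewrite <- Rmult_assoc, Rinv_l, Rmult_1_l by lra. exact H.
Qed.
End Sublinear.

Lemma sublinear_vcons_line {m} (q : E (S m) -> R) t : sublinear q ->
  q (vcons 1 vzero) * t <= q (vcons t vzero).
Proof.
  intros Hq. destruct (Rtotal_order t 0) as [Hlt|[->|Hgt]].
  - pose proof (proj1 Hq (vcons 1 vzero) (vcons (-1) vzero)) as H.
    rewrite vadd_vcons in H. replace (1 + -1) with 0 in H by ring.
    replace (vadd (@vzero m) vzero) with (@vzero m) in H by (vec_eq; ring).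
    rewrite <- vzero_vcons in H. pose proof (sublinear_zero q Hq).
    pose proof (sublinear_scal q Hq (- t) (vcons (-1) vzero) ltac:(lra)) as Ht.
    rewrite vscal_vcons in Ht. replace (- t * -1) with t in Ht by ring.
    replace (vscal (- t) (@vzero m)) with (@vzero m) in Ht by (vec_eq; ring). nra.
  - rewrite <- vzero_vcons, Rmult_0_r. now apply sublinear_zero.
  - pose proof (sublinear_scal q Hq t (vcons 1 vzero) Hgt) as Ht.
    rewrite vscal_vcons, Rmult_1_r in Ht.
    replace (vscal t (@vzero m)) with (@vzero m) in Ht by (vec_eq; ring).
    lra.
Qed.

(* Hahn-Banach in finite dimension, by induction: give the first coordinate the slope [q e1];
   [u |-> inf_t (q (t, u) - q e1 * t)] is then sublinear in the remaining coordinates. *)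
Lemma sublinear_linear_minorant m (q : E m -> R) :
  sublinear q -> exists c, forall w, pair c w <= q w.
Proof.
  revert q. induction m as [|m IH]; intros q Hq.
  - exists vzero. intro w. replace w with (@vzero 0) by (apply vext; intro i; inversion i).
    rewrite pair_zero_r. now apply sublinear_zero.
  - set (c0 := q (vcons 1 vzero)).
    assert (Hlb : forall u t, - q (vcons 0 (vscal (-1) u)) <= q (vcons t u) - c0 * t).
    { intros u t. pose proof (proj1 Hq (vcons t u) (vcons 0 (vscal (-1) u))) as H.
      rewrite vadd_vcons, Rplus_0_r in H.
      replace (vadd u (vscal (-1) u)) with (@vzero m) in H by (vec_eq; ring).
      pose proof (sublinear_vcons_line q t Hq). unfold c0. lra. }
    assert (Hinf : forall u, {r | is_infimum (fun _ : R => True) (fun t => q (vcons t u) - c0 * t) r})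
      by (intro u; apply (infimum_exists _ _ (- q (vcons 0 (vscal (-1) u)))); [now exists 0|auto]).
    set (q' u := proj1_sig (Hinf u)).
    assert (Hq' : forall u, is_infimum (fun _ : R => True) (fun t => q (vcons t u) - c0 * t) (q' u))
      by (intro u; exact (proj2_sig (Hinf u))).
    destruct (IH q') as [c' Hc'].
    + split.
      * intros u1 u2. apply (infimum_le_add _ _ _ _ _ _ _ _ _ (Hq' u1) (Hq' u2) (Hq' (vadd u1 u2))).
        intros t1 t2 _ _. exists (t1 + t2). split; [auto|].
        pose proof (proj1 Hq (vcons t1 u1) (vcons t2 u2)) as H. rewrite vadd_vcons in H. lra.
      * intros l u Hl. apply (infimum_le_scal _ _ _ _ _ _ l Hl (Hq' u) (Hq' (vscal l u))).
        intros t _. exists (l * t). split; [auto|].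
        pose proof (proj2 Hq l (vcons t u) Hl) as H. rewrite vscal_vcons in H. lra.
    + exists (vcons c0 c'). intro w. rewrite (vcons_eta w), pair_vcons.
      specialize (Hc' (vtail w)). pose proof (proj1 (Hq' (vtail w)) (w Fin.F1) I). lra.
Qed.

Definition diff_quot {n} (f : E n -> R) (p w : E n) (t : R) := (f (vadd p (vscal t w)) - f p) / t.

Section Subgradient.
Context {n : nat} (f : E n -> R) (p : E n).
Hypothesis Hf : convex f.

Lemma diff_quot_lb w t : 0 < t -> f p - f (vadd p (vscal (-1) w)) <= diff_quot f p w t.
Proof.
  intros Ht. unfold diff_quot.
  pose proof (Hf (vadd p (vscal t w)) (vadd p (vscal (-1) w)) (/ (1 + t))) as H.
  replace (vadd (vscal (/ (1 + t)) (vadd p (vscal t w))) (vscal (1 - / (1 + t)) (vadd p (vscal (-1) w))))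
    with p in H by (vec_eq; field; lra).
  assert (Hw : 0 <= / (1 + t) <= 1).
  { split; [left; apply Rinv_0_lt_compat; lra|].
    rewrite <- Rinv_1. apply Rinv_le_contravar; lra. }
  specialize (H Hw). apply (Rmult_le_compat_l (1 + t)) in H; [|lra]. clear Hw.
  apply Rmult_le_reg_l with t; [lra|].
  replace (t * ((f (vadd p (vscal t w)) - f p) / t)) with (f (vadd p (vscal t w)) - f p) by (field; lra).
  replace ((1 + t) * (/ (1 + t) * f (vadd p (vscal t w)) + (1 - / (1 + t)) * f (vadd p (vscal (-1) w))))
    with (f (vadd p (vscal t w)) + t * f (vadd p (vscal (-1) w))) in H by (field; lra).
  nra.
Qed.

Lemma diff_quot_mono w s t : 0 < s <= t -> diff_quot f p w s <= diff_quot f p w t.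
Proof.
  intros Hst. unfold diff_quot.
  assert (Hw : 0 <= s / t <= 1).
  { split; [apply Rmult_le_pos; [lra|left; apply Rinv_0_lt_compat; lra]|].
    apply Rmult_le_reg_r with t; [lra|]. field_simplify; lra. }
  pose proof (Hf (vadd p (vscal t w)) p (s / t) Hw) as H.
  replace (vadd (vscal (s / t) (vadd p (vscal t w))) (vscal (1 - s / t) p)) with (vadd p (vscal s w))
    in H by (vec_eq; field; lra).
  replace ((f (vadd p (vscal s w)) - f p) / s) with (/ s * (f (vadd p (vscal s w)) - f p)) by (field; lra).
  replace ((f (vadd p (vscal t w)) - f p) / t) with (/ s * (s / t * (f (vadd p (vscal t w)) - f p)))
    by (field; lra).
  apply Rmult_le_compat_l; [left; apply Rinv_0_lt_compat; lra|]. lra.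
Qed.

Lemma diff_quot_add w1 w2 s : 0 < s ->
  diff_quot f p (vadd w1 w2) s <= diff_quot f p w1 (2 * s) + diff_quot f p w2 (2 * s).
Proof.
  intros Hs. unfold diff_quot.
  pose proof (Hf (vadd p (vscal (2 * s) w1)) (vadd p (vscal (2 * s) w2)) (/ 2) ltac:(lra)) as H.
  replace (vadd (vscal (/ 2) (vadd p (vscal (2 * s) w1))) (vscal (1 - / 2) (vadd p (vscal (2 * s) w2))))
    with (vadd p (vscal s (vadd w1 w2))) in H by (vec_eq; field).
  apply Rmult_le_reg_l with s; [lra|].
  replace (s * ((f (vadd p (vscal s (vadd w1 w2))) - f p) / s))
    with (f (vadd p (vscal s (vadd w1 w2))) - f p) by (field; lra).
  replace (s * ((f (vadd p (vscal (2 * s) w1)) - f p) / (2 * s) +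
                (f (vadd p (vscal (2 * s) w2)) - f p) / (2 * s)))
    with (/ 2 * f (vadd p (vscal (2 * s) w1)) + (1 - / 2) * f (vadd p (vscal (2 * s) w2)) - f p)
    by (field; lra).
  lra.
Qed.

Lemma diff_quot_scal w l t : 0 < t -> 0 < l -> diff_quot f p (vscal l w) (t / l) = l * diff_quot f p w t.
Proof.
  intros Ht Hl. unfold diff_quot.
  replace (vscal (t / l) (vscal l w)) with (vscal t w) by (vec_eq; field; lra). field; lra.
Qed.

(* The subgradient is a linear minorant of the directional derivative
   [w |-> inf_(t > 0) diff_quot f p w t], which is sublinear. *)
Lemma convex_subgrad_exists : exists c, is_subgrad f p c.
Proof.
  assert (Hinf : forall w, {r | is_infimum (fun t => 0 < t) (diff_quot f p w) r})
    by (intro w; apply (infimum_exists _ _ (f p - f (vadd p (vscal (-1) w))));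
        [exists 1; lra|intros; now apply diff_quot_lb]).
  set (q w := proj1_sig (Hinf w)).
  assert (Hq : forall w, is_infimum (fun t => 0 < t) (diff_quot f p w) (q w))
    by (intro w; exact (proj2_sig (Hinf w))).
  destruct (sublinear_linear_minorant n q) as [c Hc].
  - split.
    + intros w1 w2. apply (infimum_le_add _ _ _ _ _ _ _ _ _ (Hq w1) (Hq w2) (Hq (vadd w1 w2))).
      intros t1 t2 Ht1 Ht2. exists (Rmin t1 t2 / 2).
      pose proof (Rmin_l t1 t2). pose proof (Rmin_r t1 t2).
      assert (0 < Rmin t1 t2) by (apply Rmin_pos; lra).
      split; [lra|].
      pose proof (diff_quot_add w1 w2 (Rmin t1 t2 / 2) ltac:(lra)).
      pose proof (diff_quot_mono w1 (2 * (Rmin t1 t2 / 2)) t1 ltac:(lra)).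
      pose proof (diff_quot_mono w2 (2 * (Rmin t1 t2 / 2)) t2 ltac:(lra)).
      lra.
    + intros l w Hl. apply (infimum_le_scal _ _ _ _ _ _ l Hl (Hq w) (Hq (vscal l w))).
      intros t Ht. exists (t / l). split; [now apply Rdiv_lt_0_compat|].
      rewrite diff_quot_scal by lra. lra.
  - exists c. intro z. pose proof (Hc (vsub z p)).
    pose proof (proj1 (Hq (vsub z p)) 1 ltac:(lra)) as H1. unfold diff_quot in H1.
    replace (vadd p (vscal 1 (vsub z p))) with z in H1 by (vec_eq; ring). lra.
Qed.
End Subgradient.

(** * First-order oracles and the Holder condition *)

Definition first_order_oracle {n} (nrm : E n -> R) (sh : E n -> E n) (f : E n -> R)
  (D : E n -> E n -> Prop) (xs : E n) : Prop :=
  (convex f /\ (forall z s, D z s <-> is_subgrad f z s)) \/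
  (exists gradf, cont_diff nrm sh f gradf /\ weakly_quasi_convex1 f gradf xs /\
                 (forall z s, D z s <-> s = gradf z)).

Lemma frechet_ray_derivative {n} (nrm : E n -> R) (f : E n -> R) gf (p w : E n) tau :
  is_norm nrm -> (forall z, frechet nrm f z (gf z)) ->
  derivable_pt_lim (fun t => f (vsub p (vscal t w))) tau (- pair (gf (vsub p (vscal tau w))) w).
Proof.
  intros Hn Hfr eps Heps. set (z := vsub p (vscal tau w)).
  pose proof (nrm_nonneg nrm Hn w) as Hw.
  destruct (Hfr z (eps / (2 * (nrm w + 1)))) as [dl [Hdl Hd]]; [apply Rdiv_lt_0_compat; lra|].
  exists (mkposreal (dl / (nrm w + 1)) ltac:(apply Rdiv_lt_0_compat; lra)).
  intros hh Hh0 Hhd. simpl in Hhd.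
  replace (vsub p (vscal (tau + hh) w)) with (vadd z (vscal (- hh) w)) by (unfold z; vec_eq; ring).
  assert (Hha : 0 < Rabs hh) by now apply Rabs_pos_lt.
  specialize (Hd (vscal (- hh) w)). rewrite (nrm_scal nrm Hn), Rabs_Ropp, pair_scal_r in Hd.
  assert (Rabs hh * nrm w < dl).
  { apply Rle_lt_trans with (Rabs hh * (nrm w + 1)); [nra|].
    apply Rmult_lt_reg_r with (/ (nrm w + 1)); [apply Rinv_0_lt_compat; lra|].
    replace (Rabs hh * (nrm w + 1) * / (nrm w + 1)) with (Rabs hh) by (field; lra). exact Hhd. }
  specialize (Hd H).
  replace ((f (vadd z (vscal (- hh) w)) - f z) / hh - - pair (gf z) w)
    with ((f (vadd z (vscal (- hh) w)) - f z - - hh * pair (gf z) w) / hh) by (field; lra).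
  unfold Rdiv. rewrite Rabs_mult, Rabs_inv.
  apply Rle_lt_trans with (eps / (2 * (nrm w + 1)) * (Rabs hh * nrm w) * / Rabs hh).
  - apply Rmult_le_compat_r; [left; now apply Rinv_0_lt_compat|exact Hd].
  - replace (eps / (2 * (nrm w + 1)) * (Rabs hh * nrm w) * / Rabs hh)
      with (eps * (nrm w / (2 * (nrm w + 1)))) by (field; lra).
    rewrite <- (Rmult_1_r eps) at 2. apply Rmult_lt_compat_l; [lra|].
    apply Rmult_lt_reg_r with (2 * (nrm w + 1)); [lra|]. field_simplify; lra.
Qed.

Section Oracle.
Context {n : nat} (nrm : E n -> R) (sh : E n -> E n) (f : E n -> R) (D : E n -> E n -> Prop) (xs : E n).
Hypothesis Hn : is_norm nrm.
Hypothesis Horacle : first_order_oracle nrm sh f D xs.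

Lemma oracle_exists z : exists s, D z s.
Proof.
  destruct Horacle as [[Hc HD]|[gf [_ [_ HD]]]].
  - destruct (convex_subgrad_exists f z Hc) as [s Hs]. exists s. now apply HD.
  - exists (gf z). now apply HD.
Qed.

Lemma oracle_lower_bound z s : D z s -> f z + pair s (vsub xs z) <= f xs.
Proof.
  intros Hzs. destruct Horacle as [[_ HD]|[gf [_ [Hw HD]]]].
  - now apply HD in Hzs.
  - apply HD in Hzs; subst. specialize (Hw z). rewrite pair_sub_r in *. lra.
Qed.

Lemma oracle_ray_mean_value p w al be : al < be ->
  exists c s, al <= c <= be /\ D (vsub p (vscal c w)) s /\
    f (vsub p (vscal be w)) - f (vsub p (vscal al w)) <= (be - al) * (- pair s w).
Proof.
  intros Hab. destruct Horacle as [[Hc HD]|[gf [[Hfr _] [_ HD]]]].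
  - destruct (convex_subgrad_exists f (vsub p (vscal be w)) Hc) as [s Hs].
    exists be, s. split; [lra|]. split; [now apply HD|].
    specialize (Hs (vsub p (vscal al w))).
    replace (vsub (vsub p (vscal al w)) (vsub p (vscal be w))) with (vscal (be - al) w) in Hs
      by (vec_eq; ring).
    rewrite pair_scal_r in Hs. lra.
  - destruct (MVT_cor2 (fun t => f (vsub p (vscal t w)))
      (fun t => - pair (gf (vsub p (vscal t w))) w) al be Hab) as [c [Hc1 Hc2]].
    { intros c _. now apply (frechet_ray_derivative nrm). }
    exists c, (gf (vsub p (vscal c w))). split; [lra|]. split; [now apply HD|].
    rewrite Hc1. lra.
Qed.
End Oracle.

Section Holder.
Context {n : nat} (nrm : E n -> R) (sh : E n -> E n) (D : E n -> E n -> Prop) (nu M : R).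
Hypothesis Hn : is_norm nrm.
Hypothesis Hs : is_sharp_map nrm sh.
Hypothesis Hh : holder nrm sh D nu M.

Lemma holder_const_nonneg p q gp gq : D p gp -> D q gq -> p <> q -> 0 <= M.
Proof.
  intros Hp Hq Hpq. pose proof (Hh _ _ _ _ Hp Hq) as H.
  assert (Hd : 0 < nrm (vsub p q)).
  { destruct (nrm_nonneg nrm Hn (vsub p q)) as [H0|H0]; [exact H0|].
    exfalso. apply Hpq, (nrm_sub_eq0 nrm Hn). now symmetry. }
  pose proof (rpow_pos _ nu Hd). pose proof (dnorm_nonneg nrm sh Hn Hs (vsub gp gq)). nra.
Qed.

Lemma holder_directional p w c be gp gc : 0 <= M -> 0 <= nu -> nrm w <= 1 -> 0 <= c <= be ->
  D p gp -> D (vsub p (vscal c w)) gc -> pair gp w - pair gc w <= M * rpow be nu.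
Proof.
  intros HM Hnu Hw Hc Hp Hq. pose proof (Hh _ _ _ _ Hp Hq) as H.
  replace (vsub p (vsub p (vscal c w))) with (vscal c w) in H by (vec_eq; ring).
  rewrite (nrm_scal nrm Hn), Rabs_right in H by lra.
  pose proof (nrm_nonneg nrm Hn w).
  assert (rpow (c * nrm w) nu <= rpow be nu) by (apply rpow_le_compat; nra).
  pose proof (pair_le_dnorm_unit nrm sh Hs (vsub gp gc) w Hw). rewrite pair_sub_l in *.
  assert (M * rpow (c * nrm w) nu <= M * rpow be nu) by (apply Rmult_le_compat_l; lra).
  lra.
Qed.
End Holder.

(** * Arithmetic of the rate *)

Definition holder_rate (nu : R) := (1 + nu) / (1 + 3 * nu).

Section Rates.
Context (nu : R).
Hypothesis Hnu : 0 <= nu <= 1.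

Lemma young_exp_bounds : 0 <= young_exp nu <= 1.
Proof. unfold young_exp. split; [apply Rmult_le_pos; [lra|left; apply Rinv_0_lt_compat; lra]|].
  apply Rmult_le_reg_r with (1 + nu); [lra|]. field_simplify; lra. Qed.

Lemma holder_rate_bounds : / 2 <= holder_rate nu <= 1.
Proof.
  unfold holder_rate. split; apply Rmult_le_reg_r with (1 + 3 * nu); try lra; field_simplify; lra.
Qed.

Lemma holder_rate_young_exp : holder_rate nu * (2 - young_exp nu) = 1.
Proof. unfold holder_rate, young_exp. field. lra. Qed.

Lemma young_exp_ln_div dl : 0 < dl ->
  young_exp nu * ln (young_exp nu / dl) = young_exp nu * ln (young_exp nu) - young_exp nu * ln dl.
Proof.
  intros Hdl. destruct (Req_dec nu 1) as [->|Hn1].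
  - unfold young_exp. replace ((1 - 1) / (1 + 1)) with 0 by field. ring.
  - assert (0 < young_exp nu) by (unfold young_exp; apply Rdiv_lt_0_compat; lra).
    unfold Rdiv at 1. rewrite ln_mult, ln_Rinv; try apply Rinv_0_lt_compat; lra.
Qed.
End Rates.

Lemma quadratic_pos_root G2 b c : 0 < G2 -> 0 < b -> 0 <= c ->
  exists t, 0 < t /\ G2 * t ^ 2 - b * t - c = 0.
Proof.
  intros HG Hb Hc. set (S := sqrt (b ^ 2 + 4 * G2 * c)).
  assert (HS : 0 <= S) by apply sqrt_pos.
  assert (HS2 : S * S = b ^ 2 + 4 * G2 * c) by (apply sqrt_sqrt; nra).
  exists ((b + S) / (2 * G2)). split; [apply Rdiv_lt_0_compat; lra|].
  field_simplify; [|lra]. replace (S ^ 2) with (S * S) by ring. rewrite HS2. field_simplify; lra.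
Qed.

(* Young's inequality with [dl = eps a / A'] at [t = G / young_const nu M dl]. *)
Lemma young_step nu M eps G a A' : 0 <= nu <= 1 -> 0 < M -> 0 < eps -> 0 < G -> 0 < a -> 0 < A' ->
  (forall t, 0 <= t -> t * G - M * (t * rpow t nu) / (1 + nu) <= (a ^ 2 * G ^ 2 - eps * a) / (2 * A')) ->
  A' <= a ^ 2 * young_const nu M (eps * a / A').
Proof.
  intros Hnu HM He HG Ha HA H.
  set (dl := eps * a / A'). assert (Hdl : 0 < dl) by (unfold dl; apply Rdiv_lt_0_compat; nra).
  set (L := young_const nu M dl). assert (HL : 0 < L) by apply exp_pos.
  assert (Ht : 0 <= G / L) by (left; apply Rdiv_lt_0_compat; lra).
  pose proof (young_holder nu M dl (G / L) Hnu HM Hdl Ht) as Hy. fold L in Hy. specialize (H (G / L) Ht).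
  assert (Hgain : G ^ 2 / (2 * L) <= a ^ 2 * G ^ 2 / (2 * A')).
  { replace (G ^ 2 / (2 * L)) with (G / L * G - L * (G / L) ^ 2 / 2) by (field; lra).
    replace (a ^ 2 * G ^ 2 / (2 * A')) with ((a ^ 2 * G ^ 2 - eps * a) / (2 * A') + dl / 2)
      by (unfold dl; field; lra).
    lra. }
  apply Rmult_le_reg_r with (G ^ 2 / (2 * L * A')); [apply Rdiv_lt_0_compat; nra|].
  replace (A' * (G ^ 2 / (2 * L * A'))) with (G ^ 2 / (2 * L)) by (field; lra).
  replace (a ^ 2 * L * (G ^ 2 / (2 * L * A'))) with (a ^ 2 * G ^ 2 / (2 * A')) by (field; lra).
  exact Hgain.
Qed.

Lemma young_step_rate nu M eps a A' : 0 <= nu <= 1 -> 0 < eps -> 0 < a -> 0 < A' ->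
  A' <= a ^ 2 * young_const nu M (eps * a / A') ->
  Rpower (young_const nu M eps) (- holder_rate nu) * Rpower A' (1 - holder_rate nu) <= a.
Proof.
  intros Hnu He Ha HA H.
  assert (Hln : ln (eps * a / A') = ln eps + ln a - ln A').
  { unfold Rdiv. rewrite !ln_mult, ln_Rinv; try apply Rinv_0_lt_compat; nra. }
  assert (Hdl : 0 < eps * a / A') by (apply Rdiv_lt_0_compat; nra).
  apply ln_le in H; [|exact HA]. unfold young_const in *.
  rewrite ln_mult, ln_exp, (young_exp_ln_div nu Hnu _ Hdl), Hln in H by (try apply exp_pos; nra).
  replace (ln (a ^ 2)) with (2 * ln a) in H by (rewrite ln_pow by lra; simpl; ring).
  apply ln_le_inv; [apply Rmult_lt_0_compat; apply exp_pos|exact Ha|].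
  unfold Rpower. rewrite ln_mult, !ln_exp, (young_exp_ln_div nu Hnu _ He) by apply exp_pos.
  pose proof (holder_rate_young_exp nu Hnu) as Hq.
  pose proof (holder_rate_bounds nu Hnu). pose proof (young_exp_bounds nu Hnu).
  set (q := holder_rate nu) in *. set (p := young_exp nu) in *.
  assert (Hlin : (1 - p) * ln A' - (p * ln p - p * ln eps + 2 / (1 + nu) * ln M) <= (2 - p) * ln a)
    by lra.
  (* multiply by [q = 1 / (2 - p)] *)
  apply (Rmult_le_compat_l q) in Hlin; [|lra].
  replace (q * ((2 - p) * ln a)) with (ln a) in Hlin by (rewrite <- Rmult_assoc, Hq; ring).
  replace (1 - q) with (q * (1 - p)) by lra. lra.
Qed.

(* Concavity of [Rpower _ q] turns [a_(k+1) >= c A_(k+1)^(1-q)] into [A_(k+1)^q >= A_k^q + q c]. *)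
Lemma Rpower_partial_sums_lb (A a : nat -> R) c q : 0 < q <= 1 -> 0 <= c ->
  A O = 0 -> (forall k, A (S k) = A k + a (S k)) -> (forall k, 0 < a (S k)) ->
  (forall k, c * Rpower (A (S k)) (1 - q) <= a (S k)) ->
  forall N, (1 <= N)%nat -> INR N * (q * c) <= Rpower (A N) q.
Proof.
  intros Hq Hc HA0 HAS Ha Hlb.
  assert (HApos : forall k, 0 < A (S k)).
  { induction k as [|k IH]; rewrite HAS; [rewrite HA0; specialize (Ha O)|specialize (Ha (S k))]; lra. }
  assert (Hsplit : forall k, Rpower (A (S k)) q = Rpower (A (S k)) (q - 1) * A (S k)).
  { intro k. rewrite <- (Rpower_1 (A (S k))) at 3 by apply HApos.
    rewrite <- Rpower_plus. f_equal; ring. }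
  assert (Hinc : forall k, c <= Rpower (A (S k)) (q - 1) * a (S k)).
  { intro k. specialize (Hlb k).
    replace c with (Rpower (A (S k)) (q - 1) * (c * Rpower (A (S k)) (1 - q))).
    - apply Rmult_le_compat_l; [left; apply exp_pos|exact Hlb].
    - rewrite Rmult_comm, Rmult_assoc, <- Rpower_plus.
      replace (1 - q + (q - 1)) with 0 by ring. rewrite Rpower_O by apply HApos. ring. }
  intros N HN. induction N as [|N IH]; [lia|]. destruct N as [|N].
  - simpl. rewrite Hsplit. specialize (Hinc O). rewrite HAS, HA0, Rplus_0_l in *. nra.
  - specialize (IH ltac:(lia)). rewrite S_INR.
    pose proof (Rpower_concave (A (S N)) (A (S (S N))) q (HApos N) (HApos (S N)) ltac:(lra)).
    rewrite (HAS (S N)) in *. specialize (Hinc (S N)). rewrite (HAS (S N)) in Hinc.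
    replace (A (S N) - (A (S N) + a (S (S N)))) with (- a (S (S N))) in H by ring.
    nra.
Qed.

Lemma ln_rpow x c : 0 < x \/ c = 0 -> 0 < rpow x c /\ ln (rpow x c) = c * ln x.
Proof.
  intros [Hx | ->].
  - rewrite rpow_Rpower by exact Hx. split; [apply exp_pos|apply ln_Rpower].
  - rewrite rpow_0_r, ln_1. split; lra.
Qed.

Lemma N_bound_pos_ln nu M eps Theta : 0 <= nu <= 1 -> 0 < M -> 0 < eps -> 0 < Theta ->
  0 < N_bound nu M eps Theta /\
  ln (N_bound nu M eps Theta) = (2 + 4 * nu) / (1 + 3 * nu) * ln 2 +
    (1 - nu) / (1 + 3 * nu) * ln (young_exp nu) + 2 / (1 + 3 * nu) * (ln M - ln eps) +
    (1 + nu) / (1 + 3 * nu) * ln Theta.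
Proof.
  intros Hnu HM He HT.
  assert (Hp : 0 < young_exp nu \/ (1 - nu) / (1 + 3 * nu) = 0).
  { destruct (Req_dec nu 1) as [->|Hn1]; [right; field|].
    left. unfold young_exp. apply Rdiv_lt_0_compat; lra. }
  destruct (ln_rpow _ _ Hp) as [Hp1 Hp2].
  destruct (ln_rpow (M / eps) (2 / (1 + 3 * nu)) ltac:(left; apply Rdiv_lt_0_compat; lra)) as [HM1 HM2].
  destruct (ln_rpow Theta ((1 + nu) / (1 + 3 * nu)) ltac:(left; exact HT)) as [HT1 HT2].
  assert (H2 : 0 < Rpower 2 ((2 + 4 * nu) / (1 + 3 * nu))) by apply exp_pos.
  unfold N_bound. fold (young_exp nu). split; [repeat apply Rmult_lt_0_compat; assumption|].
  rewrite !ln_mult, ln_Rpower, Hp2, HM2, HT2 by (repeat apply Rmult_lt_0_compat; assumption).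
  replace (ln (M / eps)) with (ln M - ln eps); [ring|].
  unfold Rdiv. rewrite ln_mult, ln_Rinv; try apply Rinv_0_lt_compat; lra.
Qed.

(* The constant [N_bound] is exactly what makes the lower bound on [X^q] exceed [2 Theta / eps];
   its factor [2 ^ ...] absorbs [q >= 1 / 2]. *)
Lemma N_bound_sufficient nu M eps Theta Nr X : 0 <= nu <= 1 -> 0 < M -> 0 < eps -> 0 < Theta -> 0 < X ->
  N_bound nu M eps Theta <= Nr ->
  Nr * (holder_rate nu * Rpower (young_const nu M eps) (- holder_rate nu)) <=
    Rpower X (holder_rate nu) ->
  2 * Theta / eps <= X.
Proof.
  intros Hnu HM He HT HX HN HNX.
  pose proof (holder_rate_bounds nu Hnu) as Hqb. pose proof (holder_rate_young_exp nu Hnu) as Hq.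
  pose proof (young_exp_bounds nu Hnu) as Hpb.
  destruct (N_bound_pos_ln nu M eps Theta Hnu HM He HT) as [HNB HlnNB].
  assert (Hc : 0 < Rpower (young_const nu M eps) (- holder_rate nu)) by apply exp_pos.
  assert (Hpos : 0 < Nr * (holder_rate nu * Rpower (young_const nu M eps) (- holder_rate nu)))
    by (apply Rmult_lt_0_compat; [|apply Rmult_lt_0_compat]; lra).
  apply (ln_le _ _ Hpos) in HNX.
  rewrite ln_mult, (ln_mult (holder_rate nu)), !ln_Rpower in HNX
    by (first [lra | apply Rmult_lt_0_compat; lra]).
  unfold young_const in HNX. rewrite ln_exp, (young_exp_ln_div nu Hnu _ He) in HNX.
  apply (ln_le _ _ HNB) in HN.
  assert (Hq2 : ln (/ 2) <= ln (holder_rate nu)) by (apply ln_le; lra).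
  rewrite ln_Rinv in Hq2 by lra.
  apply ln_le_inv; [apply Rdiv_lt_0_compat; lra|exact HX|].
  unfold Rdiv. rewrite !ln_mult, ln_Rinv by (try apply Rinv_0_lt_compat; lra).
  set (q := holder_rate nu) in *. set (p := young_exp nu) in *.
  assert (Hqlog : ln (N_bound nu M eps Theta) - ln 2 - q * (p * ln p - p * ln eps + 2 / (1 + nu) * ln M)
    <= q * ln X) by lra.
  (* multiply by [2 - p = 1 / q] *)
  apply (Rmult_le_compat_l (2 - p)) in Hqlog; [|lra].
  replace ((2 - p) * (q * ln X)) with (ln X) in Hqlog
    by (rewrite <- Rmult_assoc, (Rmult_comm (2 - p)), Hq; ring).
  apply Rle_trans with (2 := Hqlog). right. rewrite HlnNB. unfold q, p, holder_rate, young_exp. field. lra.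
Qed.

(** * The algorithm *)

Section Algorithm.
Variables (n : nat) (nrm : E n -> R) (sh : E n -> E n) (d : E n -> R) (gd : E n -> E n)
  (f : E n -> R) (D : E n -> E n -> Prop) (xs x0 : E n) (eps : R)
  (x v y g : nat -> E n) (beta h a A : nat -> R).
Hypothesis Hn : is_norm nrm.
Hypothesis Hs : is_sharp_map nrm sh.
Hypothesis Hp : is_prox nrm sh d gd.
Hypothesis Horacle : first_order_oracle nrm sh f D xs.
Hypothesis Hmin : is_minimizer f xs.
Hypothesis Heps : 0 < eps.
Hypothesis HU : UAGMsDR sh f D d gd eps x0 x v y g beta h a A.
Hypothesis Hg : forall k, g k <> vzero.

Let psik k := psi d gd f x0 y g a k.
Let G k := dnorm sh (g k).
Let ray k t := vsub (y k) (vscal t (sh (g k))).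

Lemma A_0 : A O = 0.
Proof. apply HU. Qed.

Lemma A_S k : A (S k) = A k + a (S k).
Proof. destruct HU as (_ & _ & _ & Hstep). apply (Hstep k). Qed.

Lemma D_y k : D (y k) (g k).
Proof. destruct HU as (_ & _ & _ & Hstep). apply (Hstep k). Qed.

Lemma pair_g_v_y k : 0 <= pair (g k) (vsub (v k) (y k)).
Proof. destruct HU as (_ & _ & _ & Hstep). apply (Hstep k). Qed.

Lemma f_y_le_x k : f (y k) <= f (x k).
Proof.
  destruct HU as (_ & _ & _ & Hstep). destruct (Hstep k) as ((_ & Hbmin & Hy & _) & _).
  rewrite Hy. replace (x k) with (vadd (v k) (vscal 1 (vsub (x k) (v k)))) at 2 by (vec_eq; ring).
  apply Hbmin; lra.
Qed.

Lemma f_x_S_le_ray k t : 0 <= t -> f (x (S k)) <= f (ray k t).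
Proof.
  intros Ht. destruct HU as (_ & _ & _ & Hstep). destruct (Hstep k) as (_ & (_ & Hhmin & Hx & _) & _).
  rewrite Hx. now apply Hhmin.
Qed.

Lemma f_x_S_le_y k : f (x (S k)) <= f (y k).
Proof.
  replace (f (y k)) with (f (ray k 0)) by (unfold ray; f_equal; vec_eq; ring).
  apply f_x_S_le_ray; lra.
Qed.

Lemma psi_v_min k z : psik k (v k) <= psik k z.
Proof.
  destruct HU as (_ & Hv0 & _ & Hstep). destruct k as [|k]; [|apply (Hstep k)].
  unfold psik; simpl. rewrite Hv0, (Breg_self d gd).
  pose proof (Breg_ge nrm sh d gd Hp z x0). pose proof (pow2_ge_0 (nrm (vsub z x0))). lra.
Qed.

Lemma G_pos k : 0 < G k.
Proof. now apply (dnorm_pos nrm sh Hn Hs). Qed.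

Lemma a_pos k : 0 <= A k -> 0 < a (S k).
Proof.
  intros HA. destruct HU as (_ & _ & _ & Hstep). destruct (Hstep k) as (_ & (_ & _ & _ & _ & Hamax) & _).
  pose proof (f_x_S_le_y k). pose proof (G_pos k).
  destruct (quadratic_pos_root (G k ^ 2) (2 * (f (y k) - f (x (S k))) + eps)
    (2 * A k * (f (y k) - f (x (S k)))))
    as [t [Ht Hroot]]; [nra|lra|nra|].
  enough (t <= a (S k)) by lra.
  apply Hamax. split; [lra|]. fold (G k).
  apply Rmult_eq_reg_r with (2 * (A k + t)); [|lra]. field_simplify; [|lra]. nra.
Qed.

Lemma A_nonneg k : 0 <= A k.
Proof.
  induction k as [|k IH]; [rewrite A_0; lra|].
  rewrite A_S. pose proof (a_pos k IH). lra.
Qed.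

Lemma A_pos k : 0 < A (S k).
Proof. rewrite A_S. pose proof (a_pos k (A_nonneg k)). pose proof (A_nonneg k). lra. Qed.

Lemma a_S_energy k :
  A (S k) * f (x (S k)) = A (S k) * f (y k) - a (S k) ^ 2 * G k ^ 2 / 2 + eps * a (S k) / 2.
Proof.
  destruct HU as (_ & _ & _ & Hstep). destruct (Hstep k) as (_ & (_ & _ & _ & [Hnz Heq] & _) & _).
  rewrite A_S, <- Heq. unfold G. field. exact Hnz.
Qed.

Lemma psi_growth k z : psik k (v k) + / 2 * nrm (vsub z (v k)) ^ 2 <= psik k z.
Proof.
  apply (strongly_convex1_min_growth nrm); [apply (psi_strongly_convex1 nrm sh d gd Hn Hp)|].
  apply psi_v_min.
Qed.

(* The step uses [psi_growth] at [v (S k)] and completes the square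
   [N^2 / 2 - a G N >= - a^2 G^2 / 2], where [N = |v (S k) - v k|]. *)
Lemma estimate_lower k : A k * f (x k) - A k * eps / 2 <= psik k (v k).
Proof.
  induction k as [|k IH].
  - rewrite A_0. unfold psik; simpl. destruct HU as (_ & Hv0 & _). rewrite Hv0, (Breg_self d gd). lra.
  - unfold psik; simpl. fold (psik k).
    set (z := v (S k)). set (N := nrm (vsub z (v k))).
    pose proof (psi_growth k z) as Hgrow. fold N in Hgrow.
    assert (Hdir : - (G k * N) <= pair (g k) (vsub z (v k))).
    { pose proof (pair_le_dnorm nrm sh Hn Hs (g k) (vsub (v k) z)) as H.
      replace (vsub (v k) z) with (vscal (-1) (vsub z (v k))) in H by (vec_eq; ring).
      rewrite pair_scal_r, (nrm_scal nrm Hn), Rabs_left in H by lra. unfold G, N. lra. }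
    replace (vsub z (y k)) with (vadd (vsub z (v k)) (vsub (v k) (y k))) by (vec_eq; ring).
    rewrite pair_add_r.
    pose proof (pair_g_v_y k). pose proof (a_pos k (A_nonneg k)). pose proof (A_nonneg k).
    pose proof (f_y_le_x k). pose proof (a_S_energy k). pose proof (G_pos k).
    rewrite A_S in *.
    assert (a (S k) * (- (G k * N)) <= a (S k) * pair (g k) (vsub z (v k)))
      by (apply Rmult_le_compat_l; lra).
    assert (0 <= a (S k) * pair (g k) (vsub (v k) (y k))) by (apply Rmult_le_pos; lra).
    assert (A k * f (y k) <= A k * f (x k)) by (apply Rmult_le_compat_l; lra).
    pose proof (pow2_ge_0 (N - a (S k) * G k)).
    nra.
Qed.

Lemma estimate_upper k : psik k xs <= Breg d gd xs x0 + A k * f xs.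
Proof.
  induction k as [|k IH]; unfold psik in *; simpl; [rewrite A_0; lra|].
  rewrite A_S. pose proof (oracle_lower_bound nrm sh f D xs Horacle (y k) (g k) (D_y k)).
  pose proof (a_pos k (A_nonneg k)).
  assert (a (S k) * (f (y k) + pair (g k) (vsub xs (y k))) <= a (S k) * f xs)
    by (apply Rmult_le_compat_l; lra).
  lra.
Qed.

Lemma convergence_bound k : (1 <= k)%nat -> f (x k) - f xs <= Breg d gd xs x0 / A k + eps / 2.
Proof.
  intros Hk. destruct k as [|k]; [lia|]. pose proof (A_pos k).
  pose proof (estimate_lower (S k)). pose proof (psi_v_min (S k) xs). pose proof (estimate_upper (S k)).
  apply Rmult_le_reg_l with (A (S k)); [lra|].
  replace (A (S k) * (Breg d gd xs x0 / A (S k) + eps / 2))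
    with (Breg d gd xs x0 + A (S k) * (eps / 2)) by (field; lra).
  nra.
Qed.

Section HolderRate.
Variables (nu M : R).
Hypothesis Hnu : 0 <= nu <= 1.
Hypothesis Hh : holder nrm sh D nu M.

Lemma ray_increment k al be : 0 <= M -> 0 <= al < be ->
  f (ray k be) - f (ray k al) <= (be - al) * (- G k + M * rpow be nu).
Proof.
  intros HM Hab.
  destruct (oracle_ray_mean_value nrm sh f D xs Hn Horacle (y k) (sh (g k)) al be ltac:(lra))
    as (c & s & Hc & HD & Hmv).
  pose proof (holder_directional nrm sh D nu M Hn Hs Hh (y k) (sh (g k)) c be (g k) s HM (proj1 Hnu)
    (nrm_sharp nrm sh Hs (g k)) ltac:(lra) (D_y k) HD).
  assert ((be - al) * (- pair s (sh (g k))) <= (be - al) * (- G k + M * rpow be nu))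
    by (apply Rmult_le_compat_l; unfold G, dnorm; lra).
  unfold ray. lra.
Qed.

Lemma ray_descent k t : 0 <= M -> 0 <= t ->
  f (ray k t) <= f (y k) - t * G k + M * (t * rpow t nu) / (1 + nu).
Proof.
  intros HM Ht. replace (f (y k)) with (f (ray k 0)) by (unfold ray; f_equal; vec_eq; ring).
  apply (holder_descent_real (fun t => f (ray k t))); auto.
  intros al be Hab. now apply ray_increment.
Qed.

(* [M = 0] would make [f] decrease linearly along the ray from [y 0], contradicting [Hmin]. *)
Lemma holder_const_pos : 0 < M.
Proof.
  destruct (oracle_exists nrm sh f D xs Horacle (ray O 1)) as [s Hs1].
  assert (HM : 0 <= M).
  { apply (holder_const_nonneg nrm sh D nu M Hn Hs Hh _ _ _ _ (D_y O) Hs1).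
    intro Heq. pose proof (G_pos O) as HG. unfold G, dnorm in HG.
    replace (sh (g O)) with (@vzero n) in HG; [rewrite pair_zero_r in HG; lra|].
    unfold ray in Heq. apply vext; intro i. pose proof (f_equal (fun u => u i) Heq) as Hi.
    unfold vsub, vscal, vzero in *. simpl in Hi. lra. }
  destruct HM as [HM|HM0]; [exact HM|exfalso].
  pose proof (G_pos O) as HG. pose proof (Hmin (y O)). set (t := (f (y O) - f xs + 1) / G O).
  assert (Ht : 0 <= t) by (unfold t; left; apply Rdiv_lt_0_compat; lra).
  pose proof (ray_descent O t (Req_le _ _ HM0) Ht). pose proof (Hmin (ray O t)).
  assert (t * G O = f (y O) - f xs + 1) by (unfold t; field; lra).
  rewrite <- HM0 in *. unfold Rdiv in *. rewrite !Rmult_0_l in *. lra.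
Qed.

Lemma a_rate k :
  Rpower (young_const nu M eps) (- holder_rate nu) * Rpower (A (S k)) (1 - holder_rate nu) <= a (S k).
Proof.
  pose proof holder_const_pos as HM. pose proof (A_pos k). pose proof (a_pos k (A_nonneg k)).
  apply (young_step_rate nu M eps); try lra.
  apply (young_step nu M eps (G k)); try lra; [apply G_pos|].
  intros t Ht. pose proof (ray_descent k t (Rlt_le _ _ HM) Ht). pose proof (f_x_S_le_ray k t Ht).
  pose proof (a_S_energy k).
  assert (f (y k) - f (x (S k)) = (a (S k) ^ 2 * G k ^ 2 - eps * a (S k)) / (2 * A (S k))).
  { unfold Rdiv. apply Rmult_eq_reg_r with (2 * A (S k)); [|lra].
    rewrite Rmult_assoc, Rinv_l, Rmult_1_r by lra. lra. }
  lra.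
Qed.

Lemma A_growth N : (1 <= N)%nat ->
  INR N * (holder_rate nu * Rpower (young_const nu M eps) (- holder_rate nu)) <=
  Rpower (A N) (holder_rate nu).
Proof.
  pose proof (holder_rate_bounds nu Hnu).
  apply (Rpower_partial_sums_lb A a); [lra|left; apply exp_pos|apply A_0|apply A_S| |apply a_rate].
  intro k. apply a_pos, A_nonneg.
Qed.

Lemma rate_bound Theta N : Breg d gd xs x0 <= Theta -> N_bound nu M eps Theta <= INR N ->
  f (x N) - f xs <= eps.
Proof.
  intros HTh HN. pose proof holder_const_pos as HM.
  pose proof (Breg_ge nrm sh d gd Hp xs x0) as HB. pose proof (pow2_ge_0 (nrm (vsub xs x0))).
  destruct (Req_dec Theta 0) as [HT0|HT0].
  - destruct N as [|N].
    + assert (Hx : xs = x0) by (apply (nrm_sub_eq0 nrm Hn); nra).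
      destruct HU as (Hx0 & _). rewrite Hx0, Hx. lra.
    + pose proof (convergence_bound (S N) ltac:(lia)). pose proof (A_pos N).
      replace (Breg d gd xs x0) with 0 in * by lra. unfold Rdiv in *. rewrite Rmult_0_l in *. lra.
  - assert (HT : 0 < Theta) by lra.
    destruct (N_bound_pos_ln nu M eps Theta Hnu HM Heps HT) as [HNB _].
    destruct N as [|N]; [simpl in HN; lra|].
    pose proof (A_pos N).
    pose proof (N_bound_sufficient nu M eps Theta (INR (S N)) (A (S N)) Hnu HM Heps HT ltac:(lra) HN
      (A_growth (S N) ltac:(lia))) as HA.
    pose proof (convergence_bound (S N) ltac:(lia)).
    assert (Breg d gd xs x0 / A (S N) <= eps / 2).
    { apply Rmult_le_reg_l with (A (S N)); [lra|].
      replace (A (S N) * (Breg d gd xs x0 / A (S N))) with (Breg d gd xs x0) by (field; lra).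
      apply (Rmult_le_compat_l (eps / 2)) in HA; [|lra].
      replace (eps / 2 * (2 * Theta / eps)) with Theta in HA by (field; lra). lra. }
    lra.
Qed.
End HolderRate.
End Algorithm.

Theorem mainTheorem10 (n : nat) (nrm : E n -> R) (sh : E n -> E n)
  (d : E n -> R) (gd : E n -> E n) (f : E n -> R) (D : E n -> E n -> Prop)
  (xs x0 : E n) (eps Theta : R)
  (x v y g : nat -> E n) (beta h a A : nat -> R) :
  is_norm nrm -> is_sharp_map nrm sh -> is_prox nrm sh d gd ->
  ((convex f /\ (forall z s, D z s <-> is_subgrad f z s)) \/
   (exists gradf, cont_diff nrm sh f gradf /\ weakly_quasi_convex1 f gradf xs /\
                  (forall z s, D z s <-> s = gradf z))) ->
  is_minimizer f xs ->
  0 < eps ->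
  Breg d gd xs x0 <= Theta ->
  UAGMsDR sh f D d gd eps x0 x v y g beta h a A ->
  (forall k, g k <> vzero) ->
  (forall k, (1 <= k)%nat -> f (x k) - f xs <= Breg d gd xs x0 / A k + eps / 2) /\
  (forall (nu M : R) (N : nat), 0 <= nu <= 1 -> is_M_nu nrm sh D nu M ->
     N_bound nu M eps Theta <= INR N -> f (x N) - f xs <= eps).
Proof.
  intros Hn Hs Hp Horacle Hmin Heps HTheta HU Hg. split.
  - intros k. eapply convergence_bound; eassumption.
  - intros nu M N Hnu [Hh _]. eapply rate_bound; eassumption.
Qed.
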